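(* Let $G$ be a signed digraph with $n$ vertices and without negative cycles, and let $f$ be a Boolean network on $G$. The following are equivalent: (1) $f$ has a unique fixed point; (2) $f$ has a synchronizing word of length $n$; (3) $f$ is synchronizing.
   Context: A signed digraph on $V$ is $(V,E)$ with $E\subseteq V\times V\times\{-1,1\}$; cycles have no repeated vertices (a loop is a cycle) and their sign is the product of arc signs. A Boolean network (BN) is $f:\{0,1\}^V\to\{0,1\}^V$; its signed interaction digraph has a positive (negative) arc from $j$ to $i$ iff for some $x$ with $x_j=0$, $f_i(x+e_j)-f_i(x)$ is positive (negative). A BN on $G$ is one whose signed interaction digraph is $G$. $f^i(x)$ is $x$ with $x_i$ replaced by $f_i(x)$; $f^{i_1\cdots i_\ell}=f^{i_\ell}\circ\cdots\circ f^{i_1}$; $w$ is synchronizing if $f^w$ is constant; $f$ is synchronizing if it has a synchronizing word. *)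

From mathcomp Require Import all_boot.
Set Implicit Arguments. Unset Strict Implicit. Unset Printing Implicit Defensive.

Section BN.
Variable V : finType.

(* configurations x in {0,1}^V; true = 1 *)
Definition config := {ffun V -> bool}.

(* signed arcs (j, i, s) : arc from j to i with sign s (true = +1, false = -1) *)
Definition arc := (V * V * bool)%type.
Definition signed_digraph := {set arc}.

(* x + e_j, used when x_j = 0 *)
Definition set_one (x : config) (j : V) : config :=
  [ffun k => if k == j then true else x k].

(* positive arc j -> i : f_i(x + e_j) - f_i(x) > 0 for some x with x_j = 0 *)
Definition pos_arc (f : config -> config) (j i : V) : bool :=
  [exists x : config, [&& ~~ x j, ~~ f x i & f (set_one x j) i]].
(* negative arc j -> i : f_i(x + e_j) - f_i(x) < 0 for some x with x_j = 0 *)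
Definition neg_arc (f : config -> config) (j i : V) : bool :=
  [exists x : config, [&& ~~ x j, f x i & ~~ f (set_one x j) i]].

Definition interaction_digraph (f : config -> config) : signed_digraph :=
  [set e : arc | if e.2 then pos_arc f e.1.1 e.1.2 else neg_arc f e.1.1 e.1.2].

Definition BN_on (G : signed_digraph) (f : config -> config) : Prop :=
  interaction_digraph f = G.

(* G has a negative cycle: distinct vertices c = v_0 ... v_{k-1} (k >= 1,
   a loop being the case k = 1) and signs s_0 ... s_{k-1} with
   (v_t, v_{t+1 mod k}, s_t) in G and product of signs = -1 *)
Definition has_negative_cycle (G : signed_digraph) : Prop :=
  exists (v : V) (p : seq V) (s : seq bool),
    let c := v :: p in
    [/\ uniq c, size s = size c,
        (forall t, t < size c ->
           ((nth v c t, nth v c (t.+1 %% size c)), nth true s t) \in G)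
      & odd (count negb s)].

Definition update (f : config -> config) (i : V) (x : config) : config :=
  [ffun k => if k == i then f x i else x k].

Definition apply_word (f : config -> config) (w : seq V) (x : config) : config :=
  foldl (fun y i => update f i y) x w.

Definition synchronizing_word (f : config -> config) (w : seq V) : Prop :=
  exists c : config, forall x : config, apply_word f w x = c.

Definition synchronizing (f : config -> config) : Prop :=
  exists w : seq V, synchronizing_word f w.

Definition unique_fixed_point (f : config -> config) : Prop :=
  exists! x : config, f x = x.

End BN.

From mathcomp Require Import all_boot zify.
Set Implicit Arguments. Unset Strict Implicit. Unset Printing Implicit Defensive.

(* Induction on the set [U] of vertices left free, those outside [U] being
   frozen by a configuration [c].  Without negative cycles every closed walk is
   positive, so a source strongly connected component [S] of [U] is balanced:
   a switching [sg] makes all its arcs positive, and [f] is monotone on [S]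
   for the order with top values [sg].  Greedy updates from the bottom and
   from the top then reach fixed points of [S] using at most [#|S|] updates
   in total; when [S] has a unique fixed point both runs end there and squeeze
   every other configuration onto it.  Freezing [S] at that point and recursing
   on [U :\: S] gives a fixed point of [f] and, if it is unique, a
   synchronizing word of length at most [#|V|]; since updates keep a fixed
   point, it can be padded to length exactly [#|V|]. *)

Lemma nonuniq_map_split (T : Type) (T' : eqType) (g : T -> T') (s : seq T) :
  ~~ uniq (map g s) ->
  exists s1 s2 s3 a b, s = s1 ++ a :: s2 ++ b :: s3 /\ g a = g b.
Proof.
have split_map y t : y \in map g t -> exists t1 t2 b, t = t1 ++ b :: t2 /\ y = g b.
  elim: t => //= b t IHt; rewrite inE => /orP[/eqP-> | /IHt[t1 [t2 [c [-> ->]]]]].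
    by exists [::], t, b.
  by exists (b :: t1), t2, c.
elim: s => //= a s IHs; rewrite negb_and negbK => /orP[/split_map | /IHs].
  by case=> s2 [s3 [b [-> gab]]]; exists [::], s2, s3, a, b.
by case=> s1 [s2 [s3 [c [d [-> gcd]]]]]; exists (a :: s1), s2, s3, c, d.
Qed.

Section SignedWalks.
Variables (V : finType) (G : signed_digraph V).

(* A walk in [cover] carries, in its boolean component, the running product
   of the signs of the arcs followed so far. *)
Definition cover : rel (V * bool) := fun a b => ((a.1, b.1), a.2 == b.2) \in G.

Definition flip_sign (a : V * bool) : V * bool := (a.1, ~~ a.2).

Lemma connect_cover_flip x y b c :
  connect cover (x, b) (y, c) -> connect cover (x, ~~ b) (y, ~~ c).
Proof.
case/connectP=> p walk_p end_p; apply/connectP; exists (map flip_sign p).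
  rewrite -[(x, ~~ b)]/(flip_sign (x, b)) path_map.
  apply: sub_path walk_p => -[u s] [w t].
  by rewrite /relpre /cover /=; case: s; case: t.
by rewrite -[(x, ~~ b)]/(flip_sign (x, b)) last_map -end_p.
Qed.

Lemma odd_count_sign_changes (a : V * bool) p :
  odd (count negb (pairmap (fun u w => u.2 == w.2) a p)) = (a.2 != (last a p).2).
Proof.
elim: p a => [|q p IHp] a /=; first by rewrite eqxx.
by rewrite oddD IHp; case: a.2; case: q.2; case: (last q p).2.
Qed.

Lemma negative_cycle_of_walk a p :
  path cover a p -> uniq (map fst p) ->
  (last a p).1 = a.1 -> (last a p).2 != a.2 -> has_negative_cycle G.
Proof.
case: p => [|q p]; first by rewrite eqxx.
set s := q :: p => walk uniq_s end1 end2.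
set c := map fst (belast a s).
have size_c : size c = size s by rewrite size_map size_belast.
have walk_vertices : map fst (a :: s) = rcons c a.1.
  by rewrite lastI map_rcons end1.
exists a.1, (map fst (belast q p)), (pairmap (fun u w => u.2 == w.2) a s).
rewrite -[_ :: map _ _]/c; split.
- move: uniq_s; have -> : map fst s = behead (map fst (a :: s)) by [].
  by rewrite walk_vertices /c /= rcons_uniq.
- by rewrite size_pairmap size_c.
- move=> t; rewrite size_c => lt_t; have := pathP a walk t lt_t.
  have vertex k : k <= size s -> nth a.1 (rcons c a.1) k = (nth a (a :: s) k).1.
    by move=> le_k; rewrite -walk_vertices (nth_map a).
  have src_t : nth a.1 c t = (nth a (a :: s) t).1.
    by rewrite -vertex ?(ltnW lt_t) // nth_rcons size_c lt_t.
  have dst_t : nth a.1 c (t.+1 %% size s) = (nth a s t).1.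
    rewrite -[nth a s t]/(nth a (a :: s) t.+1) -vertex // nth_rcons size_c.
    have [lt_t1 | ge_t1] := ltnP t.+1 (size s); first by rewrite modn_small.
    have -> : t.+1 = size s by apply/eqP; rewrite eqn_leq lt_t.
    by rewrite eqxx modnn.
  by rewrite /cover (nth_pairmap a) // src_t dst_t.
- by rewrite odd_count_sign_changes eq_sym.
Qed.

Hypothesis no_neg : ~ has_negative_cycle G.

(* A shortest negative closed walk is a cycle: at a repeated vertex it splits
   into two shorter closed walks, one of which is negative. *)
Lemma closed_walk_sign n a p :
  size p < n -> path cover a p -> (last a p).1 = a.1 -> (last a p).2 = a.2.
Proof.
elim: n a p => // n IHn a p size_p walk end1.
have [uniq_p | /nonuniq_map_split[p1 [p2 [p3 [q1 [q2 [def_p q12]]]]]]] :=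
  boolP (uniq (map fst p)).
  apply/eqP; apply: contraT => end2.
  by case: no_neg; apply: negative_cycle_of_walk walk uniq_p end1 end2.
move: walk size_p end1; rewrite {}def_p cat_path /= cat_path /=.
case/and5P=> walk1 arc1 walk2 arc2 walk3.
rewrite !size_cat /= size_cat !last_cat /= last_cat /= => size_p end1.
have eq_q : q2 = q1.
  have lt_n : size (rcons p2 q2) < n by move: size_p; rewrite size_rcons; lia.
  have loop : path cover q1 (rcons p2 q2) by rewrite rcons_path walk2 arc2.
  have := IHn q1 _ lt_n loop; rewrite last_rcons => /(_ (esym q12)) sign_q.
  by rewrite [q2]surjective_pairing -q12 sign_q -surjective_pairing.
subst q2.
have := IHn a (p1 ++ q1 :: p3).
rewrite cat_path /= walk1 arc1 walk3 last_cat size_cat /=.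
by apply=> //; lia.
Qed.

Lemma connect_cover_sign x b c : connect cover (x, b) (x, c) -> c = b.
Proof.
case/connectP=> p walk end_p.
by have := closed_walk_sign (ltnSn _) walk; rewrite -end_p; apply.
Qed.
End SignedWalks.

Lemma has_negative_cycle_subset (V : finType) (G H : signed_digraph V) :
  H \subset G -> has_negative_cycle H -> has_negative_cycle G.
Proof.
move=> /subsetP HG [v [p [s [uniq_c size_s arcs odd_s]]]].
by exists v, p, s; split=> // t /arcs /HG.
Qed.

Definition induced (V : finType) (G : signed_digraph V) (U : {set V}) :
  signed_digraph V := [set e in G | (e.1.1 \in U) && (e.1.2 \in U)].

(* Switching the vertices [i] of [S] with [sg i = false] makes every arc
   inside [S] positive. *)
Definition balanced_source (V : finType) (G : signed_digraph V)
    (U S : {set V}) (sg : V -> bool) : Prop :=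
  forall i j b, i \in S -> j \in U -> ((j, i), b) \in G ->
    j \in S /\ b = (sg j == sg i).

Section BalancedSource.
Variables (V : finType) (G : signed_digraph V) (U : {set V}).
Hypothesis no_neg : ~ has_negative_cycle G.

Local Notation H := (induced G U).

Lemma no_negative_cycle_induced : ~ has_negative_cycle H.
Proof.
move=> neg; apply/no_neg/(has_negative_cycle_subset _ neg).
by apply/subsetP => e; rewrite inE => /andP[].
Qed.

Definition reaches_in (x y : V) := [exists b, connect (cover H) (x, true) (y, b)].

Lemma reaches_inP x y b :
  reaches_in x y -> exists c, connect (cover H) (x, b) (y, c).
Proof.
case/existsP=> c xy; case: b; first by exists c.
by exists (~~ c); apply: connect_cover_flip xy.
Qed.

Lemma reaches_in_refl x : reaches_in x x.
Proof. by apply/existsP; exists true. Qed.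

Lemma reaches_in_trans x y z : reaches_in x y -> reaches_in y z -> reaches_in x z.
Proof.
case/existsP=> b xy /(reaches_inP b)[c yz].
by apply/existsP; exists c; apply: connect_trans xy yz.
Qed.

Lemma reaches_in_arc j i b : j \in U -> i \in U -> ((j, i), b) \in G -> reaches_in j i.
Proof.
move=> jU iU ji; apply/existsP; exists b; apply: connect1.
by rewrite /cover !inE /= jU iU !andbT; case: b ji.
Qed.

Section Pivot.
Variable v : V.
Hypothesis v_source : forall u, u \in U -> reaches_in u v -> reaches_in v u.

Definition pivot_block := [set u in U | reaches_in u v].
Definition pivot_sign u := connect (cover H) (v, true) (u, true).

Lemma pivot_sign_connect u :
  u \in pivot_block -> connect (cover H) (v, true) (u, pivot_sign u).
Proof.
rewrite inE => /andP[uU uv]; case sign_u: (pivot_sign u); first exact: sign_u.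
have [[] vu] := reaches_inP true (v_source uU uv) => //.
by rewrite /pivot_sign vu in sign_u.
Qed.

Lemma pivot_sign_unique u b :
  u \in pivot_block -> connect (cover H) (v, true) (u, b) -> b = pivot_sign u.
Proof.
move=> uB vu; have vu' := pivot_sign_connect uB.
move: uB; rewrite inE => /andP[_ /(reaches_inP b)[d ud]].
have closed := connect_cover_sign no_negative_cycle_induced.
apply/eqP; apply: contraT => neq_b.
have sign_u : pivot_sign u = ~~ b by move: neq_b; case: (b); case: (pivot_sign u).
have d_true := closed _ _ _ (connect_trans vu ud); rewrite sign_u in vu'.
by have := closed _ _ _ (connect_trans vu' (connect_cover_flip ud)); rewrite d_true.
Qed.

Lemma pivot_block_balanced : balanced_source G U pivot_block pivot_sign.
Proof.
move=> i j b iB jU ji; have iU : i \in U by move: iB; rewrite inE => /andP[].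
have jB : j \in pivot_block.
  move: iB; rewrite !inE jU => /andP[_]; apply: reaches_in_trans.
  exact: reaches_in_arc ji.
have arc : cover H (j, pivot_sign j) (i, pivot_sign j == b).
  rewrite /cover !inE /= jU iU !andbT.
  suff -> : (pivot_sign j == (pivot_sign j == b)) = b by [].
  by case: (b); case: (pivot_sign j).
split=> //.
have := pivot_sign_unique iB (connect_trans (pivot_sign_connect jB) (connect1 arc)).
by move=> <-; case: (b); case: (pivot_sign j).
Qed.
End Pivot.

Lemma exists_balanced_source : U != set0 ->
  exists (S : {set V}) (sg : V -> bool),
    [/\ S \subset U, S != set0 & balanced_source G U S sg].
Proof.
case/set0Pn=> u0 u0U.
(* A vertex with fewest ancestors in [U] lies in a source component. *)
pose ancestors u := [set y | reaches_in y u].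
have [v vU v_min] := @arg_minnP _ u0 [in U] (fun u => #|ancestors u|) u0U.
have v_source u : u \in U -> reaches_in u v -> reaches_in v u.
  move=> uU uv; have sub_uv : ancestors u \subset ancestors v.
    by apply/subsetP => y; rewrite !inE => /reaches_in_trans; apply.
  have eq_card : #|ancestors u| = #|ancestors v|.
    by apply/eqP; rewrite eqn_leq subset_leq_card ?v_min.
  by have := subset_cardP eq_card sub_uv v; rewrite !inE reaches_in_refl.
exists (pivot_block v), (pivot_sign v); split.
- by apply/subsetP => u; rewrite inE => /andP[].
- by apply/set0Pn; exists v; rewrite inE vU reaches_in_refl.
- exact: pivot_block_balanced.
Qed.
End BalancedSource.

Section Network.
Variables (V : finType) (f : config V -> config V).
Local Notation G := (interaction_digraph f).

Definition assign (x : config V) (j : V) (b : bool) : config V :=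
  [ffun k => if k == j then b else x k].

Lemma assign_no_arc i j b (x : config V) :
  x j != b -> ((j, i), x j) \notin G -> f x i -> f (assign x j b) i.
Proof.
move=> xj_b no_arc fx; apply: contraNT no_arc => nfz; rewrite inE /=.
have def_b : b = ~~ x j by move: xj_b; case: (b); case: (x j).
rewrite {}def_b in nfz *; case xj: (x j) nfz => /= nfz.
- apply/existsP; exists (assign x j false); rewrite ffunE eqxx nfz /=.
  suff -> : set_one (assign x j false) j = x by [].
  by apply/ffunP => k; rewrite !ffunE; case: (eqVneq k j) => [->|].
- by apply/existsP; exists x; rewrite xj fx.
Qed.

Lemma no_arc_le i (x y : config V) :
  (forall j, x j != y j -> ((j, i), x j) \notin G) -> f x i -> f y i.
Proof.
have [n] := ubnP #|[set j | x j != y j]|; elim: n x => // n IHn x lt_n no_arc fx.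
case: (pickP [pred j | x j != y j]) => [j /= xy_j | same]; last first.
  by have <- : x = y by apply/ffunP => k; apply/eqP/negbFE/same.
pose z := assign x j (y j).
have diff_z : [set k | z k != y k] = [set k | x k != y k] :\ j.
  by apply/setP => k; rewrite !inE ffunE; case: (eqVneq k j) => [->|]; rewrite ?eqxx.
apply: (IHn z).
- by move: lt_n; rewrite diff_z (cardsD1 j) inE xy_j.
- move=> k; rewrite ffunE; case: (eqVneq k j) => [-> | _]; first by rewrite eqxx.
  exact: no_arc.
- exact: assign_no_arc (no_arc j xy_j) fx.
Qed.

Lemma no_arc_eq i (x y : config V) :
  (forall j b, x j != y j -> ((j, i), b) \notin G) -> f x i = f y i.
Proof.
move=> no_arc; apply/idP/idP; apply: no_arc_le => j xy_j; apply: no_arc => //.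
by rewrite eq_sym.
Qed.

Definition eq_off (U : {set V}) (x y : config V) := forall k, k \notin U -> x k = y k.

Definition fixed_on (U : {set V}) (x : config V) := forall i, i \in U -> f x i = x i.

Definition unique_completion (U : {set V}) (c : config V) :=
  forall x y, eq_off U x c -> fixed_on U x -> eq_off U y c -> fixed_on U y -> x = y.

Definition sg_le (S : {set V}) (sg : V -> bool) (x y : config V) :=
  forall i, i \in S -> x i == sg i -> y i == sg i.

Definition monotone_on (U S : {set V}) (sg : V -> bool) :=
  forall x y, eq_off U x y -> sg_le S sg x y -> sg_le S sg (f x) (f y).

Lemma eq_off_sym (U : {set V}) (x y : config V) : eq_off U x y -> eq_off U y x.
Proof. by move=> xy k /xy. Qed.

Lemma eq_off_trans (U : {set V}) (x y z : config V) :
  eq_off U x y -> eq_off U y z -> eq_off U x z.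
Proof. by move=> xy yz k kU; rewrite xy ?yz. Qed.

Lemma eq_off_sub (U U' : {set V}) (x y : config V) :
  U \subset U' -> eq_off U x y -> eq_off U' x y.
Proof. by move=> /subsetP UU' xy k kU'; apply: xy; apply: contra kU'; apply: UU'. Qed.

Lemma balanced_source_monotone (U S : {set V}) (sg : V -> bool) :
  balanced_source G U S sg -> monotone_on U S sg.
Proof.
move=> bal x y xy le_xy i iS.
have in_S j b : x j != y j -> ((j, i), b) \in G -> j \in S /\ b = (sg j == sg i).
  by move=> xy_j; apply: bal => //; apply: contraNT xy_j => /xy ->.
case sg_i: (sg i); rewrite ?eqb_id ?eqbF_neg; [|apply: contra];
  apply: no_arc_le => j xy_j; [|rewrite eq_sym in xy_j]; apply/negP;
  case/(in_S _ _ xy_j) => jS; move/implyP: (le_xy j jS) xy_j; rewrite sg_i;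
  by case: (x j); case: (y j); case: (sg j).
Qed.

Lemma balanced_source_local (U S : {set V}) sg i (x y : config V) :
  balanced_source G U S sg -> i \in S -> eq_off (U :\: S) x y -> f x i = f y i.
Proof.
move=> bal iS xy; apply: no_arc_eq => j b xy_j; apply/negP => ji.
have /setDP[jU /negP[]] : j \in U :\: S by apply: contraNT xy_j => /xy ->.
by case: (bal i j b iS jU ji).
Qed.

Lemma apply_word_cat w1 w2 (x : config V) :
  apply_word f (w1 ++ w2) x = apply_word f w2 (apply_word f w1 x).
Proof. exact: foldl_cat. Qed.

Lemma eq_off_apply_word (U : {set V}) w (x : config V) :
  all (mem U) w -> eq_off U (apply_word f w x) x.
Proof.
elim: w x => [|i w IHw] x //= /andP[iU wU].
apply: eq_off_trans (IHw _ wU) _ => k kU; rewrite ffunE.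
by case: (eqVneq k i) => // ki; rewrite ki iU in kU.
Qed.

Lemma apply_word_fixed (U : {set V}) w (x : config V) :
  all (mem U) w -> fixed_on U x -> apply_word f w x = x.
Proof.
elim: w => [|i w IHw] //= /andP[iU wU] fix_x.
suff -> : update f i x = x by exact: IHw.
by apply/ffunP => k; rewrite ffunE; case: (eqVneq k i) => [->|]; first exact: fix_x.
Qed.

Definition height (S : {set V}) (sg : V -> bool) (x : config V) :=
  #|[set i in S | x i == sg i]|.

Lemma height_le_card S sg (x : config V) : height S sg x <= #|S|.
Proof. by apply/subset_leq_card/subsetP => i; rewrite inE => /andP[]. Qed.

Lemma height_negb S sg (x : config V) :
  height S sg x + height S (fun i => ~~ sg i) x = #|S|.
Proof.
rewrite /height -(cardsID [set i | x i == sg i] S); congr (_ + _); apply: eq_card => i.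
  by rewrite !inE andbC.
by rewrite !inE andbC; case: (x i); case: (sg i).
Qed.

Definition fill (S : {set V}) (b : V -> bool) (c : config V) : config V :=
  [ffun k => if k \in S then b k else c k].

Section Ascent.
Variables (U S : {set V}) (sg : V -> bool).
Hypotheses (SU : S \subset U) (mono : monotone_on U S sg).

Lemma apply_word_monotone w (x y : config V) :
  all (mem S) w -> eq_off U x y -> sg_le S sg x y ->
  sg_le S sg (apply_word f w x) (apply_word f w y).
Proof.
elim: w x y => [|i w IHw] x y //= /andP[iS wS] xy le_xy; apply: IHw => //.
  move=> k kU; rewrite !ffunE; case: (eqVneq k i) => [ki|_]; last exact: xy.
  by rewrite ki (subsetP SU) in kU.
move=> k kS; rewrite !ffunE; case: (eqVneq k i) => [->|_]; last exact: le_xy.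
exact: mono.
Qed.

Lemma ascent (x : config V) : sg_le S sg x (f x) ->
  exists w, [/\ all (mem S) w, fixed_on S (apply_word f w x)
              & size w + height S sg x <= height S sg (apply_word f w x)].
Proof.
have [n] := ubnP (#|S| - height S sg x); elim: n x => // n IHn x lt_n post_x.
have [/existsP[i /andP[iS unstable]] | stable] :=
  boolP [exists i, (i \in S) && (f x i != x i)]; last first.
  exists [::]; split=> // i iS; apply/eqP; apply: contraNT stable => unstable.
  by apply/existsP; exists i; rewrite iS.
have [fxi xi] : f x i = sg i /\ x i = ~~ sg i.
  by move/implyP: (post_x i iS) unstable; case: (f x i); case: (x i); case: (sg i).
pose x' := update f i x.
have le_x' : sg_le S sg x x'.
  by move=> k kS; rewrite ffunE; case: (eqVneq k i) => [->|]; rewrite ?fxi.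
have off_x' : eq_off U x x'.
  move=> k kU; rewrite ffunE; case: (eqVneq k i) => [ki|//].
  by rewrite ki (subsetP SU) in kU.
have post_x' : sg_le S sg x' (f x').
  move=> k kS; rewrite ffunE; case: (eqVneq k i) => [->|_] top_k.
    by apply: (mono off_x' le_x'); rewrite ?fxi.
  exact/(mono off_x' le_x')/post_x.
have height_x' : height S sg x' = (height S sg x).+1.
  rewrite /height (_ : [set k in S | x' k == sg k] = i |: [set k in S | x k == sg k]).
    by rewrite cardsU1 !inE iS xi /=; case: (sg i).
  apply/setP => k; rewrite !inE ffunE.
  by case: (eqVneq k i) => [->|]; rewrite ?iS ?fxi ?eqxx.
have lt_n' : #|S| - height S sg x' < n.
  by move: lt_n (height_le_card S sg x'); rewrite height_x'; lia.
have [w [wS fixed_w size_w]] := IHn x' lt_n' post_x'.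
by exists (i :: w); split; rewrite /= ?iS //; rewrite height_x' addnS in size_w.
Qed.

Lemma bottom_ascent c : exists w y,
  [/\ all (mem S) w, y = apply_word f w (fill S (fun i => ~~ sg i) c),
      fixed_on S y, eq_off S y c & size w <= height S sg y].
Proof.
have [|w [wS fixed_y size_w]] := ascent (x := fill S (fun i => ~~ sg i) c).
  by move=> i iS; rewrite ffunE iS; case: (sg i).
exists w, (apply_word f w (fill S (fun i => ~~ sg i) c)); split=> //.
  apply: eq_off_trans (eq_off_apply_word _ wS) _ => k kS.
  by rewrite ffunE (negbTE kS).
exact: leq_trans (leq_addr _ _) size_w.
Qed.
End Ascent.

Lemma sg_le_negb S sg (x y : config V) :
  sg_le S (fun i => ~~ sg i) x y <-> sg_le S sg y x.
Proof.
by split=> le_xy i /le_xy; case: (x i); case: (y i); case: (sg i) => //= ->.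
Qed.

Lemma monotone_on_negb U S sg :
  monotone_on U S sg -> monotone_on U S (fun i => ~~ sg i).
Proof. by move=> mono x y xy /sg_le_negb/(mono _ _ (eq_off_sym xy))/sg_le_negb. Qed.

Lemma block_sync (U S : {set V}) sg c :
  S \subset U -> monotone_on U S sg -> unique_completion S c ->
  exists w y, [/\ all (mem S) w, size w <= #|S|, eq_off S y c, fixed_on S y
                & forall x, eq_off U x c -> {in S, apply_word f w x =1 y}].
Proof.
move=> SU mono fixed_uniq.
have [w1 [y [w1S def_y fixed_y off_y size_w1]]] := bottom_ascent SU mono c.
have [w2 [y' [w2S def_y' fixed_y' off_y' size_w2]]] :=
  bottom_ascent SU (monotone_on_negb mono) c.
have yy' : y' = y by apply: fixed_uniq.
rewrite {fixed_y' off_y'}yy' in def_y' size_w2.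
exists (w1 ++ w2), y; split=> //.
- by rewrite all_cat w1S.
- by rewrite size_cat -(height_negb S sg y) leq_add.
(* The run from [x] is squeezed between the two runs, which both end at [y]. *)
move=> x off_x i iS; set z := apply_word f (w1 ++ w2) x.
have off_fill b : eq_off U (fill S b c) x.
  apply: eq_off_trans (eq_off_sym off_x); apply: eq_off_sub SU _ => k kS.
  by rewrite ffunE (negbTE kS).
have lo : sg_le S sg y z.
  have bottom_le : sg_le S sg (fill S (fun i => ~~ sg i) c) x.
    by move=> k kS; rewrite ffunE kS; case: (sg k).
  have := apply_word_monotone (w := w1 ++ w2) SU mono _ (off_fill _) bottom_le.
  by rewrite all_cat w1S apply_word_cat -def_y (apply_word_fixed w2S fixed_y); apply.
have hi : sg_le S (fun i => ~~ sg i) y z.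
  have top_le : sg_le S (fun i => ~~ sg i)
                  (fill S (fun i => ~~ ~~ sg i) c) (apply_word f w1 x).
    by move=> k kS; rewrite ffunE kS; case: (sg k).
  have off_w1 := eq_off_sub SU (eq_off_apply_word x w1S).
  have := apply_word_monotone SU (monotone_on_negb mono) w2S
            (eq_off_trans (off_fill _) (eq_off_sym off_w1)) top_le.
  by rewrite -def_y' -apply_word_cat.
move/implyP: (lo i iS); move/implyP: (hi i iS).
by case: (z i); case: (y i); case: (sg i).
Qed.

End Network.

Section FixedPoints.
Variables (V : finType) (f : config V -> config V).
Local Notation G := (interaction_digraph f).
Hypothesis no_neg : ~ has_negative_cycle G.

Lemma ltn_card_setD (U S : {set V}) :
  S \subset U -> S != set0 -> #|U :\: S| < #|U|.
Proof.
move=> SU /set0Pn[v vS]; rewrite cardsD (setIidPr SU).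
have S_gt0 : 0 < #|S| by apply/card_gt0P; exists v.
by have := subset_leq_card SU; lia.
Qed.

Lemma fixed_on_glue (U S : {set V}) sg c (x y : config V) :
  S \subset U -> balanced_source G U S sg -> eq_off S y c -> fixed_on f S y ->
  eq_off (U :\: S) x y -> fixed_on f (U :\: S) x -> eq_off U x c /\ fixed_on f U x.
Proof.
move=> SU bal off_y fixed_y xy fixed_x; split.
  move=> k kU; have kS : k \notin S by apply: contra kU; apply: (subsetP SU).
  by rewrite xy ?off_y // inE (negbTE kU) andbF.
move=> i iU; have [iS | iS] := boolP (i \in S).
  by rewrite (balanced_source_local bal iS xy) fixed_y // xy // inE iS.
by apply: fixed_x; rewrite inE iS.
Qed.

Lemma exists_fixed_completion (U : {set V}) (c : config V) :
  exists x, eq_off U x c /\ fixed_on f U x.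
Proof.
have [n] := ubnP #|U|; elim: n U c => // n IHn U c lt_U.
have [-> | U_ne0] := eqVneq U set0.
  by exists c; split=> // i; rewrite inE.
have [S [sg [SU S_ne0 bal]]] := exists_balanced_source no_neg U_ne0.
have [_ [y [_ _ fixed_y off_y _]]] := bottom_ascent SU (balanced_source_monotone bal) c.
have [x [xy fixed_x]] := IHn _ y (leq_trans (ltn_card_setD SU S_ne0) lt_U).
by exists x; apply: fixed_on_glue SU bal off_y fixed_y xy fixed_x.
Qed.

Section UniqueCompletion.
Variables (U S : {set V}) (sg : V -> bool) (c : config V).
Hypotheses (SU : S \subset U) (bal : balanced_source G U S sg).
Hypothesis uniq_U : unique_completion f U c.

Lemma unique_completion_block : unique_completion f S c.
Proof.
move=> y y' off_y fixed_y off_y' fixed_y'.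
have [x [xy fixed_x]] := exists_fixed_completion (U :\: S) y.
have [x' [xy' fixed_x']] := exists_fixed_completion (U :\: S) y'.
have [off_x fixed_xU] := fixed_on_glue SU bal off_y fixed_y xy fixed_x.
have [off_x' fixed_xU'] := fixed_on_glue SU bal off_y' fixed_y' xy' fixed_x'.
have xx' := uniq_U off_x fixed_xU off_x' fixed_xU'.
apply/ffunP => k; have [kS | kS] := boolP (k \in S).
  by rewrite -xy -?xy' ?xx' // inE kS.
by rewrite off_y ?off_y'.
Qed.

Lemma unique_completion_rest y :
  eq_off S y c -> fixed_on f S y -> unique_completion f (U :\: S) y.
Proof.
move=> off_y fixed_y x x' xy fixed_x x'y fixed_x'.
have [off_x fixed_xU] := fixed_on_glue SU bal off_y fixed_y xy fixed_x.
have [off_x' fixed_xU'] := fixed_on_glue SU bal off_y fixed_y x'y fixed_x'.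
exact: uniq_U.
Qed.
End UniqueCompletion.

Lemma sync_of_unique_completion (U : {set V}) (c : config V) :
  unique_completion f U c ->
  exists w z, [/\ all (mem U) w, size w <= #|U|
                & forall x, eq_off U x c -> apply_word f w x = z].
Proof.
have [n] := ubnP #|U|; elim: n U c => // n IHn U c lt_U uniq_U.
have [-> | U_ne0] := eqVneq U set0.
  exists [::], c; split=> // x off_x.
  by apply/ffunP => k; apply: off_x; rewrite inE.
have [S [sg [SU S_ne0 bal]]] := exists_balanced_source no_neg U_ne0.
have [w1 [y [w1S size_w1 off_y fixed_y sync_w1]]] :=
  block_sync SU (balanced_source_monotone bal) (unique_completion_block SU bal uniq_U).
have [w2 [z [w2U size_w2 sync_w2]]] :=
  IHn _ _ (leq_trans (ltn_card_setD SU S_ne0) lt_U)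
    (unique_completion_rest SU bal uniq_U off_y fixed_y).
exists (w1 ++ w2), z; split.
- rewrite all_cat (sub_all _ w1S) ?(sub_all _ w2U) // => k; first by case/setDP.
  exact: (subsetP SU).
- by rewrite size_cat -(cardsID S U) (setIidPr SU) leq_add.
move=> x off_x; rewrite apply_word_cat; apply: sync_w2 => k.
rewrite inE negb_and negbK => /orP[kS | kU]; first exact: sync_w1.
have kS : k \notin S by apply: contra kU; apply: (subsetP SU).
by rewrite (eq_off_apply_word f x w1S) // off_x // off_y.
Qed.

Lemma fixed_on_setT (x : config V) : fixed_on f [set: V] x <-> f x = x.
Proof.
by split=> [fixed_x | fx i _]; [apply/ffunP => i; apply: fixed_x | rewrite fx].
Qed.

Lemma eq_off_setT (x y : config V) : eq_off [set: V] x y.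
Proof. by move=> k; rewrite inE. Qed.

Lemma all_setT (w : seq V) : all (mem [set: V]) w.
Proof. by apply/allP => i; rewrite inE. Qed.

Lemma unique_fixed_point_sync_word :
  unique_fixed_point f -> exists w, size w = #|V| /\ synchronizing_word f w.
Proof.
case=> z [fixed_z z_uniq].
have fixed_uniq : unique_completion f [set: V] z.
  by move=> x y _ /fixed_on_setT/z_uniq <- _ /fixed_on_setT/z_uniq <-.
have [w [z' [_ size_w sync_w]]] := sync_of_unique_completion fixed_uniq.
have {}fixed_z : fixed_on f [set: V] z by apply/fixed_on_setT.
have z'z : z' = z.
  by rewrite -(sync_w z (eq_off_setT _ _)) (apply_word_fixed (all_setT w)).
(* Updates keep the fixed point [z], so [w] can be padded arbitrarily. *)
exists (w ++ take (#|V| - size w) (enum V)); split.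
  by rewrite size_cat size_takel -?cardT ?leq_subr //; rewrite cardsT in size_w; lia.
exists z => x; rewrite apply_word_cat sync_w ?z'z; last exact: eq_off_setT.
exact: apply_word_fixed (all_setT _) fixed_z.
Qed.

Lemma synchronizing_unique_fixed_point : synchronizing f -> unique_fixed_point f.
Proof.
case=> w [z sync_w].
have [x [_ /fixed_on_setT fixed_x]] := exists_fixed_completion [set: V] z.
have word_fixed y : f y = y -> apply_word f w y = y.
  by move/fixed_on_setT; apply: apply_word_fixed (all_setT w).
exists x; split=> // y /word_fixed fixed_y.
by rewrite -(word_fixed x fixed_x) sync_w -(sync_w y) fixed_y.
Qed.
End FixedPoints.

Theorem proposition8 (V : finType) (G : signed_digraph V)
    (f : config V -> config V) :
  ~ has_negative_cycle G -> BN_on G f ->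
  (unique_fixed_point f <->
     exists w : seq V, size w = #|V| /\ synchronizing_word f w) /\
  ((exists w : seq V, size w = #|V| /\ synchronizing_word f w) <->
     synchronizing f).
Proof.
rewrite /BN_on => no_neg def_G; subst G.
have sync_word := unique_fixed_point_sync_word no_neg.
have unique := synchronizing_unique_fixed_point no_neg.
split; split.
- exact: sync_word.
- by case=> w [_ sync_w]; apply: unique; exists w.
- by case=> w [_ sync_w]; exists w.
- by move/unique/sync_word.
Qed.
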